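(* Let $S,T$ be finite nonempty sets, $A,B\in\mathbb{R}^{S\times T}$, $\varepsilon>0$, and $f,g\in\mathbb{R}$ such that $E(f,g)\neq\emptyset$. If either ($f-\varepsilon\ge\alpha$ and $g-\varepsilon\ge\beta$) or ($f-\varepsilon<\alpha$ and $g-\varepsilon<\beta$), then $E\cap E(f,g)\neq\emptyset$.
   Context: $\operatorname{co}(A,B)$ is the convex hull in $\mathbb{R}^2$ of $\{(A(s,t),B(s,t)):s\in S,t\in T\}$. The punishment levels are $\alpha:=\min_{y\in\Delta(T)}\max_{x\in\Delta(S)}xAy$ and $\beta:=\min_{x\in\Delta(S)}\max_{y\in\Delta(T)}xBy$, where $xMy=\sum_{s,t}M(s,t)x(s)y(t)$. The set of uniform equilibrium payoffs is $E:=\{(\bar f,\bar g)\in\operatorname{co}(A,B):\bar f\ge\alpha,\ \bar g\ge\beta\}$, and the $\varepsilon$-acceptable payoff set is $E(f,g):=\operatorname{co}(A,B)\cap\{(\bar f,\bar g)\in\mathbb{R}^2:\bar f+\varepsilon\ge f,\ \bar g+\varepsilon\ge g\}$. *)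

From HB Require Import structures.
From mathcomp Require Import all_boot all_order all_algebra.
From mathcomp Require Import classical_sets reals.
Set Implicit Arguments. Unset Strict Implicit. Unset Printing Implicit Defensive.
Import Order.TTheory GRing.Theory Num.Theory.
Local Open Scope ring_scope.
Local Open Scope classical_set_scope.

Section Game.
Variables (R : realType) (S T : finType).

Definition mixed (I : finType) (x : I -> R) : Prop :=
  (forall i, 0 <= x i) /\ \sum_(i : I) x i = 1.

Definition bilin (M : S -> T -> R) (x : S -> R) (y : T -> R) : R :=
  \sum_(s : S) \sum_(t : T) M s t * x s * y t.

(* co(A,B): convex hull of {(A s t, B s t)}, i.e. the set of convex
   combinations of these finitely many points. *)
Definition co (A B : S -> T -> R) : set (R * R) :=
  [set p | exists lam : S -> T -> R,
     (forall s t, 0 <= lam s t) /\ \sum_(s : S) \sum_(t : T) lam s t = 1 /\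
     p = (\sum_(s : S) \sum_(t : T) lam s t * A s t,
          \sum_(s : S) \sum_(t : T) lam s t * B s t)].

(* alpha := min_{y in Delta(T)} max_{x in Delta(S)} xAy
   (min/max written as inf/sup; they are attained) *)
Definition alpha (A : S -> T -> R) : R :=
  inf [set r | exists2 y : T -> R, mixed y &
         r = sup [set v | exists2 x : S -> R, mixed x & v = bilin A x y]].

Definition beta (B : S -> T -> R) : R :=
  inf [set r | exists2 x : S -> R, mixed x &
         r = sup [set v | exists2 y : T -> R, mixed y & v = bilin B x y]].

Definition Eq_payoffs (A B : S -> T -> R) : set (R * R) :=
  [set p | co A B p /\ alpha A <= p.1 /\ beta B <= p.2].

Definition Eacc (A B : S -> T -> R) (eps f g : R) : set (R * R) :=
  [set p | co A B p /\ f <= p.1 + eps /\ g <= p.2 + eps].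

End Game.

From HB Require Import structures.
From mathcomp Require Import all_boot all_order all_algebra.
From mathcomp Require Import classical_sets reals.
From mathcomp Require Import ring lra.
Import Order.TTheory GRing.Theory Num.Theory.
Local Open Scope ring_scope.
Set Implicit Arguments. Unset Strict Implicit. Unset Printing Implicit Defensive.

(* In the first case every point of E(f,g) already clears both punishment
   levels.  In the second case every point of E lies in E(f,g), so it suffices
   that E is nonempty.  By the minimax theorem player 1 has a mixed strategy x
   with xAy >= alpha for every y, and player 2 one y with xBy >= beta for every
   x; the payoff pair of (x, y) is then in E.  The minimax theorem is derived
   from Gordan's alternative (either finitely many vectors have a nontrivial
   nonnegative dependence or some y makes all their inner products negative),
   which is proved by induction on the number of vectors. *)

Section Gordan.
Variables (R : realType) (I J : finType).

Definition dot (p y : J -> R) := \sum_j p j * y j.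

Definition semipos_dependent (P : I -> J -> R) (X : {set I}) :=
  exists2 x : I -> R, (forall i, i \in X -> 0 <= x i) &
    0 < \sum_(i in X) x i /\ forall j, \sum_(i in X) x i * P i j = 0.

Definition neg_solvable (P : I -> J -> R) (X : {set I}) :=
  exists y, forall i, i \in X -> dot (P i) y < 0.

Lemma dot_combl (a b : R) p q y :
  dot (fun j => a * p j + b * q j) y = a * dot p y + b * dot q y.
Proof. by rewrite /dot !mulr_sumr -big_split /=; apply: eq_bigr => j _; ring. Qed.

Lemma dot_combr (l : R) p y z : dot p (fun j => y j + l * z j) = dot p y + l * dot p z.
Proof. by rewrite /dot mulr_sumr -big_split /=; apply: eq_bigr => j _; ring. Qed.

Lemma gordan_singleton (P : I -> J -> R) (i0 : I) :
  semipos_dependent P [set i0] \/ neg_solvable P [set i0].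
Proof.
have [P0|/forallPn [j0 Pj0]] := boolP [forall j, P i0 j == 0].
  left; exists (fun=> 1) => [i _|]; first exact: ler01.
  rewrite big_set1 ltr01; split=> // j.
  by rewrite big_set1 mul1r (eqP (forallP P0 j)).
right; exists (fun j => - P i0 j) => i; rewrite inE => /eqP ->.
rewrite /dot; under eq_bigr do rewrite mulrN; rewrite sumrN oppr_lt0 (bigD1 j0) //=.
have sq_j0 : 0 < P i0 j0 * P i0 j0 by rewrite -expr2 exprn_even_gt0.
have sq_rest : 0 <= \sum_(j | j != j0) P i0 j * P i0 j.
  by apply: sumr_ge0 => j _; rewrite -expr2 sqr_ge0.
lra.
Qed.

Lemma dependent_lift (P P' : I -> J -> R) (X : {set I}) (i0 : I) (u v : I -> R) :
  i0 \in X ->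
  (forall i, i \in X :\ i0 -> [/\ 0 <= u i, 0 <= v i & u i + v i = 1]) ->
  (forall i j, i \in X :\ i0 -> P' i j = u i * P i j + v i * P i0 j) ->
  semipos_dependent P' (X :\ i0) -> semipos_dependent P X.
Proof.
move=> Xi0 uv P'E [x x_ge0 [sum_gt0 comb0]].
set x0 := \sum_(k in X :\ i0) x k * v k.
have split_sum (F : I -> R -> R) :
    \sum_(i in X) F i (if i == i0 then x0 else x i * u i)
    = F i0 x0 + \sum_(i in X :\ i0) F i (x i * u i).
  rewrite (big_setD1 i0) //= eqxx; congr (_ + _).
  by apply: eq_bigr => i; rewrite !inE => /andP [/negbTE -> _].
exists (fun i => if i == i0 then x0 else x i * u i).
  move=> i Xi; case: eqP => [_|/eqP ne].
    by apply: sumr_ge0 => k Xk; have [_ vk _] := uv k Xk; rewrite mulr_ge0 ?x_ge0.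
  have Xi' : i \in X :\ i0 by rewrite !inE ne.
  by have [uk _ _] := uv i Xi'; rewrite mulr_ge0 ?x_ge0.
split.
  rewrite (split_sum (fun _ r => r)) /x0 -big_split /=; congr (0 < _): sum_gt0.
  by apply: eq_bigr => i /uv [_ _ uv1]; rewrite -mulrDr addrC uv1 mulr1.
move=> j; rewrite -[RHS](comb0 j) (split_sum (fun i r => r * P i j)) /x0 mulr_suml.
rewrite -big_split /=.
by apply: eq_bigr => i Xi; rewrite P'E //; ring.
Qed.

Lemma exists_threshold (X : {set I}) (i1 : I) (a w : I -> R) (b d : R) :
  i1 \in X -> 0 <= b ->
  (forall i, i \in X -> 0 < a i /\ b * w i + a i * d < 0) ->
  exists l, (forall i, i \in X -> w i < l * a i) /\ b * l + d < 0.
Proof.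
move=> Xi1 b_ge0 Xa.
have [imax Ximax w_le] := @arg_maxP _ _ I i1 (mem X) (fun i => w i / a i) Xi1.
set m := w imax / a imax; have [a_gt0 bwad] := Xa _ Ximax.
have bmd : b * m + d < 0.
  by rewrite -(pmulr_llt0 _ a_gt0) mulrDl -mulrA divfK ?gt_eqF // [d * _]mulrC.
set t := - (b * m + d) / (b + 1).
have t_gt0 : 0 < t by rewrite divr_gt0 // ?oppr_gt0 // ltr_wpDl.
exists (m + t); split.
  move=> i Xi; have [ai_gt0 _] := Xa i Xi.
  have : w i / a i <= m by apply: w_le.
  rewrite ler_pdivrMr // => wm.
  by rewrite (le_lt_trans wm) // mulrDl ltrDl mulr_gt0.
have -> : b * (m + t) + d = (b * m + d) / (b + 1).
  by rewrite /t; field; rewrite gt_eqF // ltr_wpDl.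
by rewrite pmulr_llt0 // invr_gt0 ltr_wpDl.
Qed.

Lemma gordan_subset (P : I -> J -> R) (X : {set I}) :
  semipos_dependent P X \/ neg_solvable P X.
Proof.
have [n] := ubnP #|X|; elim: n => // n IHn in P X *; rewrite ltnS => leXn.
case: (set_0Vmem X) => [->|[i0 Xi0]].
  by right; exists (fun=> 0) => i; rewrite inE.
set X' := X :\ i0.
have ltX'n : (#|X'| < n)%N by move: leXn; rewrite (cardsD1 i0) Xi0.
have memX i : i \in X -> i = i0 \/ i \in X'.
  by rewrite !inE; case: eqP => [-> _|_ Xi]; [left | right].
case: (set_0Vmem X') => [X'0|[i1 X'i1]].
  by rewrite -(finset.setD1K Xi0) -/X' X'0 finset.setU0; apply: gordan_singleton.
have [dep|[y1 y1_neg]] := IHn P X' ltX'n.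
  left; apply: (dependent_lift (u := fun=> 1) (v := fun=> 0) Xi0 _ _ dep).
    by move=> i _; rewrite ler01 lexx addr0.
  by move=> i j _; rewrite mul1r mul0r addr0.
set b := dot (P i0) y1.
have [b_lt0|b_ge0] := ltP b 0.
  by right; exists y1 => i /memX [->|/y1_neg].
pose a i := - dot (P i) y1.
have a_gt0 i : i \in X' -> 0 < a i by move=> /y1_neg; rewrite oppr_gt0.
(* [P' i] is the point of the segment [P i, P i0] orthogonal to [y1]. *)
pose P' i j := b / (a i + b) * P i j + a i / (a i + b) * P i0 j.
have [dep'|[y2 y2_neg]] := IHn P' X' ltX'n.
  left; apply: (dependent_lift Xi0 _ _ dep') => // i X'i.
  have ab_gt0 : 0 < a i + b by rewrite ltr_pwDl ?a_gt0.
  split; rewrite ?divr_ge0 ?(ltW (a_gt0 _ X'i)) ?(ltW ab_gt0) //.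
  by rewrite -mulrDl [b + _]addrC divff ?gt_eqF.
set d := dot (P i0) y2.
have [l [l_gt l_lt]] :
    exists l, (forall i, i \in X' -> dot (P i) y2 < l * a i) /\ b * l + d < 0.
  apply: (exists_threshold X'i1 b_ge0) => i X'i; have ai_gt0 := a_gt0 i X'i.
  have ab_gt0 : 0 < a i + b by rewrite ltr_pwDl.
  have dotP' : dot (P' i) y2 = (b * dot (P i) y2 + a i * d) / (a i + b).
    by rewrite /P' dot_combl -/d; field; rewrite gt_eqF.
  by split=> //; have := y2_neg i X'i; rewrite dotP' pmulr_llt0 // invr_gt0.
right; exists (fun j => y2 j + l * y1 j) => i /memX [->|X'i]; rewrite dot_combr.
  by rewrite -/d -/b addrC mulrC.
by have := l_gt i X'i; rewrite /a mulrN; lra.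
Qed.

Theorem gordan (P : I -> J -> R) :
  (exists2 x : I -> R, (forall i, 0 <= x i) &
     0 < \sum_i x i /\ forall j, \sum_i x i * P i j = 0)
  \/ exists y, forall i, dot (P i) y < 0.
Proof.
have sum_setT (F : I -> R) : \sum_(i in [set: I]) F i = \sum_i F i.
  by apply: eq_bigl => i; rewrite inE.
have [[x x_ge0 [sum_gt0 comb0]]|[y y_neg]] := gordan_subset P [set: I].
  left; exists x => [i|]; first by rewrite x_ge0 ?inE.
  by rewrite sum_setT in sum_gt0; split=> // j; rewrite -[LHS]sum_setT.
by right; exists y => i; rewrite y_neg ?inE.
Qed.

End Gordan.

Local Open Scope classical_set_scope.

Section MixedStrategies.
Variable R : realType.

Lemma mixed_dirac (I : finType) (i0 : I) : mixed (fun i => (i == i0)%:R : R).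
Proof.
split=> [i|]; first exact: ler0n.
by rewrite (bigD1 i0) //= eqxx big1 ?addr0 // => i /negbTE ->.
Qed.

Lemma sum_dirac_mul (I : finType) (i0 : I) (u : I -> R) :
  \sum_i (i == i0)%:R * u i = u i0.
Proof.
by rewrite (bigD1 i0) //= eqxx mul1r big1 ?addr0 // => i /negbTE ->; rewrite mul0r.
Qed.

Lemma mixed_normalize (I : finType) (x : I -> R) :
  (forall i, 0 <= x i) -> 0 < \sum_i x i -> mixed (fun i => x i / \sum_k x k).
Proof.
move=> x_ge0 sum_gt0; split=> [i|]; first by rewrite divr_ge0 // ltW.
by rewrite -mulr_suml divff // gt_eqF.
Qed.

Lemma mixed_sum_le (I : finType) (x u : I -> R) (c : R) :
  mixed x -> (forall i, u i <= c) -> \sum_i x i * u i <= c.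
Proof.
move=> [x_ge0 x_sum1] u_le; rewrite -[leRHS]mul1r -x_sum1 mulr_suml.
by apply: ler_sum => i _; rewrite ler_wpM2l.
Qed.

Lemma mixed_sum_ge (I : finType) (x u : I -> R) (c : R) :
  mixed x -> (forall i, c <= u i) -> c <= \sum_i x i * u i.
Proof.
move=> [x_ge0 x_sum1] u_ge; rewrite -[leLHS]mul1r -x_sum1 mulr_suml.
by apply: ler_sum => i _; rewrite ler_wpM2l.
Qed.

Lemma fin_lbound (K : finType) (h : K -> R) : exists c, forall k, c <= h k.
Proof.
exists (- \sum_k `|h k|) => k; rewrite lerNl (le_trans (ler_norm (- h k))) // normrN.
by rewrite (bigD1 k) //= lerDl sumr_ge0.
Qed.

Lemma sup_mixed (I : finType) (i0 : I) (u : I -> R) (F : (I -> R) -> R) :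
  (forall x, F x = \sum_i x i * u i) ->
  exists i, sup [set w | exists2 x, mixed x & w = F x] = u i.
Proof.
move=> Fu; have [imax _ u_le] := @arg_maxP _ _ I i0 xpredT u isT.
set V := [set w | exists2 x, mixed x & w = F x].
have ub : ubound V (u imax).
  by move=> _ [x x_mixed ->]; rewrite Fu mixed_sum_le // => i; apply: u_le.
have V_imax : V (u imax).
  by exists (fun i => (i == imax)%:R); rewrite ?Fu ?sum_dirac_mul //; exact: mixed_dirac.
exists imax; apply/eqP; rewrite eq_le ge_sup //=; last by exists (u imax).
by apply: ub_le_sup => //; exists (u imax).
Qed.

Lemma inf_sup_le_pure_reply (I J : finType) (i0 : I) (M : I -> J -> R)
    (F : (I -> R) -> (J -> R) -> R) :
  (forall x y, F x y = \sum_i x i * \sum_j y j * M i j) ->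
  forall y, mixed y -> exists i,
    inf [set r | exists2 y, mixed y & r = sup [set w | exists2 x, mixed x & w = F x y]]
      <= \sum_j y j * M i j.
Proof.
move=> FM y y_mixed.
have sup_pure y' :
    exists i, sup [set w | exists2 x, mixed x & w = F x y'] = \sum_j y' j * M i j.
  exact: (sup_mixed i0 (FM ^~ y')).
have [c c_le] := fin_lbound (fun p : I * J => M p.1 p.2).
have [i sup_eq] := sup_pure y; exists i; rewrite -sup_eq; apply: ge_inf; last by exists y.
exists c => _ [y' y'_mixed ->]; have [i' ->] := sup_pure y'.
by apply: mixed_sum_ge => // j; apply: (c_le (i', j)).
Qed.

End MixedStrategies.

Theorem minimax_guarantee (R : realType) (I J : finType) (j0 : J)
    (M : I -> J -> R) (c : R) :
  (forall y, mixed y -> exists i, c <= \sum_j y j * M i j) ->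
  exists2 x, mixed x & forall j, c <= \sum_i x i * M i j.
Proof.
move=> reply.
(* The vectors [- e_j] turn the slack of each column into a dependence
   coefficient, and force a solution [y] of the second alternative to be positive. *)
pose Q (k : I + J) j := match k with inl i => M i j - c | inr j' => - (j' == j)%:R end.
have [[x x_ge0 [sum_gt0 comb0]]|[y y_neg]] := gordan Q.
  set s := \sum_i x (inl i).
  have slack j : \sum_i x (inl i) * M i j - c * s = x (inr j).
    move: (comb0 j); rewrite big_sumType /=.
    under [X in _ + X]eq_bigr => j' _ do rewrite mulrN mulrC.
    rewrite sumrN sum_dirac_mul mulr_sumr -sumrB => /eqP; rewrite subr_eq0 => /eqP <-.
    by apply: eq_bigr => i _; ring.
  have s_gt0 : 0 < s.
    rewrite lt_def sumr_ge0 // andbT; apply/eqP => s0.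
    have xI0 i : x (inl i) = 0 by apply: (psumr_eq0P _ s0).
    suff : \sum_k x k = 0 by move/gt_eqF: sum_gt0 => /eqP.
    rewrite big_sumType /= -/s s0 add0r big1 // => j _.
    by rewrite -slack s0 mulr0 subr0 big1 // => i _; rewrite xI0 mul0r.
  exists (fun i => x (inl i) / s); first exact: mixed_normalize.
  move=> j; under eq_bigr do rewrite mulrAC.
  by rewrite -mulr_suml ler_pdivlMr // -subr_ge0 slack.
have y_gt0 j : 0 < y j.
  have := y_neg (inr j); rewrite /dot /=.
  by under eq_bigr do rewrite mulNr eq_sym; rewrite sumrN sum_dirac_mul oppr_lt0.
have y_sum_gt0 : 0 < \sum_j y j.
  by rewrite (bigD1 j0) //= ltr_pwDl // sumr_ge0 // => j _; apply: ltW.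
have [i /=] := reply _ (mixed_normalize (fun j => ltW (y_gt0 j)) y_sum_gt0).
under eq_bigr do rewrite mulrAC; rewrite -mulr_suml ler_pdivlMr // -subr_ge0 => reply_i.
suff : dot (Q (inl i)) y = \sum_j y j * M i j - c * \sum_k y k.
  by move: (y_neg (inl i)) => /[swap] ->; rewrite ltNge reply_i.
by rewrite /dot mulr_sumr -sumrB; apply: eq_bigr => j _; rewrite /=; ring.
Qed.

Section Game.
Variables (R : realType) (S T : finType).
Implicit Types (A B : S -> T -> R) (x : S -> R) (y : T -> R).

Lemma bilin_suml A x y : bilin A x y = \sum_s x s * \sum_t y t * A s t.
Proof. by apply: eq_bigr => s _; rewrite mulr_sumr; apply: eq_bigr => t _; ring. Qed.

Lemma bilin_sumr A x y : bilin A x y = \sum_t y t * \sum_s x s * A s t.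
Proof.
rewrite /bilin exchange_big; apply: eq_bigr => t _; rewrite mulr_sumr.
by apply: eq_bigr => s _; ring.
Qed.

Lemma co_bilin A B x y : mixed x -> mixed y -> co A B (bilin A x y, bilin B x y).
Proof.
move=> [x_ge0 x_sum1] [y_ge0 y_sum1]; exists (fun s t => x s * y t); split.
  by move=> s t; rewrite mulr_ge0.
split; last by congr pair; apply: eq_bigr => s _; apply: eq_bigr => t _; ring.
by rewrite -[RHS]x_sum1; apply: eq_bigr => s _; rewrite -mulr_sumr y_sum1 mulr1.
Qed.

Lemma alpha_le_pure_reply (s0 : S) A y :
  mixed y -> exists s, alpha A <= \sum_t y t * A s t.
Proof. exact: (inf_sup_le_pure_reply s0 (bilin_suml A)). Qed.

Lemma beta_le_pure_reply (t0 : T) B x :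
  mixed x -> exists t, beta B <= \sum_s x s * B s t.
Proof.
exact: (inf_sup_le_pure_reply t0 (M := fun t s => B s t) (F := fun y x => bilin B x y)
          (fun y x => bilin_sumr B x y)).
Qed.

Lemma Eq_payoffs_nonempty (s0 : S) (t0 : T) A B : Eq_payoffs A B !=set0.
Proof.
have [x x_mixed alpha_le] := minimax_guarantee t0 (alpha_le_pure_reply s0 A).
have [y y_mixed beta_le] :=
  minimax_guarantee s0 (M := fun t s => B s t) (beta_le_pure_reply t0 B).
exists (bilin A x y, bilin B x y); split; first exact: co_bilin.
by rewrite /= bilin_sumr bilin_suml; split; apply: mixed_sum_ge.
Qed.

End Game.

Theorem mainTheorem8 (R : realType) (S T : finType)
  (HS : (0 < #|S|)%N) (HT : (0 < #|T|)%N)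
  (A B : S -> T -> R) (eps f g : R) (Heps : 0 < eps)
  (Hne : Eacc A B eps f g !=set0)
  (Hcase : (alpha A <= f - eps /\ beta B <= g - eps) \/
           (f - eps < alpha A /\ g - eps < beta B)) :
  Eq_payoffs A B `&` Eacc A B eps f g !=set0.
Proof.
case: Hcase => [[alpha_le beta_le]|[alpha_gt beta_gt]].
  have [p [co_p [f_le g_le]]] := Hne.
  by exists p; split; split=> //; split; lra.
have [s0 _] := card_gt0P HS; have [t0 _] := card_gt0P HT.
have [p [co_p [alpha_le beta_le]]] := Eq_payoffs_nonempty s0 t0 A B.
by exists p; split; split=> //; split; lra.
Qed.
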